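(* Let $N$ be a bidirected Manhattan network on $T$ such that the boundary of every strip is contained in $N$ and is directed in $N$ as a directed cycle (clockwise or counterclockwise). Then any two strips belonging to the same block are compatible.
   Context: $T$ is a finite set of points (terminals) in the plane, no two on a common horizontal or vertical line. For points $p,q$, $R(p,q)$ is the smallest closed axis-parallel rectangle containing $p$ and $q$; for ${\bf t}_i,{\bf t}_j\in T$, $R_{i,j}=R({\bf t}_i,{\bf t}_j)$, and $R_{i,j}$ is empty if $R_{i,j}\cap T=\{{\bf t}_i,{\bf t}_j\}$. $\Gamma(T)$ is the grid formed by the horizontal and vertical lines through the terminals, restricted to the bounding box of $T$ (vertices: intersection points of these lines; edges: segments between consecutive vertices on a line). An oriented subnetwork of $\Gamma(T)$ is a set of edges of $\Gamma(T)$ each directed in exactly one sense; a directed Manhattan path from $p$ to $q$ is a directed path in it of length $|p^x-q^x|+|p^y-q^y|$. A bidirected Manhattan network on $T$ is an oriented subnetwork of $\Gamma(T)$ containing a directed Manhattan path from $t$ to $t'$ for every ordered pair of distinct terminals $t,t'\in T$. An empty rectangle $R_{i,j}$ is a vertical strip if ${\bf t}_i^x,{\bf t}_j^x$ are consecutive in the sorted list of $x$-coordinates of $T$, and a horizontal strip if ${\bf t}_i^y,{\bf t}_j^y$ are consecutive in the sorted list of $y$-coordinates of $T$; a strip is a vertical or horizontal strip. $R_{i,j}$ has positive slope if $({\bf t}_i^x-{\bf t}_j^x)({\bf t}_i^y-{\bf t}_j^y)>0$, negative slope otherwise. Two strips (whose boundaries are directed cycles) are compatible if they have the same slope and the same orientation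 (both clockwise or both counterclockwise), or different slopes and opposite orientations. Quadrants: $Q_1(p)=\{q:q^x\ge p^x,q^y\ge p^y\}$, $Q_2(p)=\{q:q^x\le p^x,q^y\ge p^y\}$, $Q_3(p)=\{q:q^x\le p^x,q^y\le p^y\}$, $Q_4(p)=\{q:q^x\ge p^x,q^y\le p^y\}$. Blocks: let $P_{24}=\{t\in T: Q_2(t)\cap T=Q_4(t)\cap T=\{t\}\}$ and $P_{13}=\{t\in T:Q_1(t)\cap T=Q_3(t)\cap T=\{t\}\}$. If $P_{24}\ne\emptyset$, sort it by $x$-coordinate as $p_1,\dots,p_m$; the blocks are $T\cap Q_3(p_1)$, $T\cap R(p_a,p_{a+1})$ for $1\le a<m$, and $T\cap Q_1(p_m)$. If $P_{24}=\emptyset\ne P_{13}$, sort $P_{13}$ by $x$-coordinate as $p_1,\dots,p_m$; the blocks are $T\cap Q_2(p_1)$, $T\cap R(p_a,p_{a+1})$ for $1\le a<m$, and $T\cap Q_4(p_m)$. If both are empty, $T$ itself is the only block. A strip $R_{i,j}$ belongs to a block $B$ if ${\bf t}_i,{\bf t}_j\in B$. *)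

From HB Require Import structures.
From mathcomp Require Import all_boot all_order all_algebra.
Set Implicit Arguments. Unset Strict Implicit. Unset Printing Implicit Defensive.
Import Order.TTheory GRing.Theory Num.Theory.
Local Open Scope ring_scope.

Section Manhattan.
Variables (R : realFieldType) (n : nat) (x y : 'I_n -> R).

(* vertices of the grid Gamma(T): (a,b) denotes the point (x a, y b);
   terminal t_k is the vertex (k,k). *)
Definition vtx := ('I_n * 'I_n)%type.
Definition vx (v : vtx) : R := x v.1.
Definition vy (v : vtx) : R := y v.2.

Definition consec_x (a b : 'I_n) : Prop :=
  x a != x b /\ forall c, ~ (Num.min (x a) (x b) < x c < Num.max (x a) (x b)).
Definition consec_y (a b : 'I_n) : Prop :=
  y a != y b /\ forall c, ~ (Num.min (y a) (y b) < y c < Num.max (y a) (y b)).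

Definition grid_edge (u v : vtx) : Prop :=
  (u.2 = v.2 /\ consec_x u.1 v.1) \/ (u.1 = v.1 /\ consec_y u.2 v.2).

Definition oriented_subnetwork (N : rel vtx) : Prop :=
  forall u v, N u v -> grid_edge u v /\ ~~ N v u.

Definition dist1 (u v : vtx) : R := `|vx u - vx v| + `|vy u - vy v|.

Fixpoint plen (p : vtx) (s : seq vtx) : R :=
  match s with [::] => 0 | v :: s' => dist1 p v + plen v s' end.

Definition manhattan_path (N : rel vtx) (p q : vtx) : Prop :=
  exists s : seq vtx, [/\ path N p s, last p s = q & plen p s = dist1 p q].

Definition term (k : 'I_n) : vtx := (k, k).

Definition bidirected_manhattan (N : rel vtx) : Prop :=
  oriented_subnetwork N /\
  forall t t' : 'I_n, t != t' -> manhattan_path N (term t) (term t').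

Definition in_rect (i j : 'I_n) (px py : R) : Prop :=
  Num.min (x i) (x j) <= px <= Num.max (x i) (x j) /\
  Num.min (y i) (y j) <= py <= Num.max (y i) (y j).

Definition empty_rect (i j : 'I_n) : Prop :=
  i != j /\ forall k, in_rect i j (x k) (y k) -> k = i \/ k = j.

Definition vstrip (i j : 'I_n) : Prop := empty_rect i j /\ consec_x i j.
Definition hstrip (i j : 'I_n) : Prop := empty_rect i j /\ consec_y i j.
Definition strip (i j : 'I_n) : Prop := vstrip i j \/ hstrip i j.

Definition pos_slope (i j : 'I_n) : Prop := 0 < (x i - x j) * (y i - y j).

(* u -> v is a grid edge on the boundary of R_{i,j}, traversed counterclockwise
   (bottom side left to right, right side upwards, top side right to left,
   left side downwards) *)
Definition ccw_side (i j : 'I_n) (u v : vtx) : Prop :=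
  let xl := Num.min (x i) (x j) in let xr := Num.max (x i) (x j) in
  let yb := Num.min (y i) (y j) in let yt := Num.max (y i) (y j) in
  [\/ [/\ u.2 = v.2, vy u = yb, vx u < vx v & xl <= vx u /\ vx v <= xr],
      [/\ u.1 = v.1, vx u = xr, vy u < vy v & yb <= vy u /\ vy v <= yt],
      [/\ u.2 = v.2, vy u = yt, vx v < vx u & xl <= vx v /\ vx u <= xr] |
      [/\ u.1 = v.1, vx u = xl, vy v < vy u & yb <= vy v /\ vy u <= yt]].

Definition boundary_ccw (N : rel vtx) (i j : 'I_n) : Prop :=
  forall u v, grid_edge u v -> ccw_side i j u v -> N u v.
Definition boundary_cw (N : rel vtx) (i j : 'I_n) : Prop :=
  forall u v, grid_edge u v -> ccw_side i j u v -> N v u.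

Definition boundary_directed_cycle (N : rel vtx) (i j : 'I_n) : Prop :=
  boundary_ccw N i j \/ boundary_cw N i j.

Definition compatible (N : rel vtx) (i j k l : 'I_n) : Prop :=
  ((pos_slope i j <-> pos_slope k l) /\
     ((boundary_ccw N i j /\ boundary_ccw N k l) \/
      (boundary_cw N i j /\ boundary_cw N k l)))
  \/
  (~ (pos_slope i j <-> pos_slope k l) /\
     ((boundary_ccw N i j /\ boundary_cw N k l) \/
      (boundary_cw N i j /\ boundary_ccw N k l))).

(* quadrants, restricted to terminals: t_k in Q_m(t_p) *)
Definition inQ1 (p k : 'I_n) : Prop := x p <= x k /\ y p <= y k.
Definition inQ2 (p k : 'I_n) : Prop := x k <= x p /\ y p <= y k.
Definition inQ3 (p k : 'I_n) : Prop := x k <= x p /\ y k <= y p.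
Definition inQ4 (p k : 'I_n) : Prop := x p <= x k /\ y k <= y p.

Definition inP24 (t : 'I_n) : Prop :=
  forall k, (inQ2 t k \/ inQ4 t k) -> k = t.
Definition inP13 (t : 'I_n) : Prop :=
  forall k, (inQ1 t k \/ inQ3 t k) -> k = t.

Definition first_x (P : 'I_n -> Prop) (p : 'I_n) : Prop :=
  P p /\ forall r, P r -> x p <= x r.
Definition last_x (P : 'I_n -> Prop) (p : 'I_n) : Prop :=
  P p /\ forall r, P r -> x r <= x p.
Definition next_x (P : 'I_n -> Prop) (p q : 'I_n) : Prop :=
  [/\ P p, P q, x p < x q & forall r, P r -> ~ (x p < x r < x q)].

Definition rect_set (p q : 'I_n) : {set 'I_n} :=
  [set k | (Num.min (x p) (x q) <= x k <= Num.max (x p) (x q)) &&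
           (Num.min (y p) (y q) <= y k <= Num.max (y p) (y q))].

Definition is_block (B : {set 'I_n}) : Prop :=
  [\/ (exists t, inP24 t) /\
       [\/ exists p, first_x inP24 p /\ B = [set k | (x k <= x p) && (y k <= y p)],
           exists p q, next_x inP24 p q /\ B = rect_set p q |
           exists p, last_x inP24 p /\ B = [set k | (x p <= x k) && (y p <= y k)]],
      [/\ ~ (exists t, inP24 t), (exists t, inP13 t) &
       [\/ exists p, first_x inP13 p /\ B = [set k | (x k <= x p) && (y p <= y k)],
           exists p q, next_x inP13 p q /\ B = rect_set p q |
           exists p, last_x inP13 p /\ B = [set k | (x p <= x k) && (y k <= y p)]]] |
      [/\ ~ (exists t, inP24 t), ~ (exists t, inP13 t) & B = [set: 'I_n]]].

End Manhattan.

(* A strip is of horizontal type ([htype]) when, at its two terminal corners,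
   the horizontal boundary edge leaves the terminal and the vertical one enters
   it, and of vertical type ([vtype]) otherwise; two strips are compatible
   exactly when they have the same type ([compatible_of_types]).  So it
   suffices to show that two strips of one block never have different types.
   - Locally ([interior_type_conflict]): a terminal in neither P24 nor P13 is
     not a corner of strips of both types.  Otherwise either the two strips
     share a boundary edge at the terminal, oriented both ways, or a third
     terminal lies in a quadrant towards which both grid edges at the terminal
     point the same way, and no Manhattan path can join the two terminals.
   - Along a block ([interior_types_agree]): blocks are x-convex and their
     non-interior terminals are x-extreme ([block_props]); the strips between
     x-consecutive terminals carry the local fact from one interior terminal to
     any other one, by induction on the number of terminals in between.
   - A strip whose two corners are non-interior is its whole block
     ([corner_strip_block]); then the other strip is the same one, and no strip
     has both types ([strip_types_exclusive]). *)

From HB Require Import structures.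
From mathcomp Require Import all_boot all_order all_algebra.
From mathcomp Require Import lra.
From Stdlib Require Import Classical.
Set Implicit Arguments. Unset Strict Implicit. Unset Printing Implicit Defensive.
Import Order.TTheory GRing.Theory Num.Theory.
Local Open Scope ring_scope.

Lemma same_pair (T : eqType) (S : T -> T -> Prop) (i j k l : T) :
  (forall i j, S j i = S i j) -> i != j -> i = k \/ i = l -> j = k \/ j = l ->
  S i j -> S k l.
Proof.
move=> Ssym hij hi hj; case: hi hj hij => -> [] -> hne hS //;
  by [rewrite eqxx in hne | rewrite Ssym].
Qed.

Section Coordinate.
Variables (R : realFieldType) (n : nat) (f : 'I_n -> R).
Hypothesis hf : injective f.

Definition between (a b c : 'I_n) : bool :=
  Num.min (f a) (f b) < f c < Num.max (f a) (f b).

Lemma betweenP a b c :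
  between a b c <-> (f a < f c < f b) \/ (f b < f c < f a).
Proof.
rewrite /between; case: (ltgtP (f a) (f b)) => h.
- by split; [left | case=> // /andP[]; lra].
- by split; [right | case=> // /andP[]; lra].
- by split; [case/andP; lra | case=> /andP[]; lra].
Qed.

Lemma between_neq a b c : between a b c -> a != c /\ b != c.
Proof.
by move=> /betweenP h; split; apply/eqP => e; subst; case: h => /andP[]; lra.
Qed.

Lemma between_side a b c : between a b c -> (f a < f c) = (f a < f b).
Proof.
case/betweenP => /andP[h1 h2]; first by rewrite h1 (lt_trans h1 h2).
by rewrite !ltNge (ltW (lt_trans h1 h2)) (ltW h2).
Qed.

Lemma coord_neq {a b} : a != b -> f a != f b.
Proof. by apply: contra => /eqP /hf ->. Qed.

Lemma consec_sym a b : consec_x f a b -> consec_x f b a.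
Proof. by case=> h1 h2; split=> [|c]; rewrite 1?eq_sym // minC maxC. Qed.

Lemma consec_neq a b : consec_x f a b -> b != a.
Proof. by case=> h _; apply: contraNneq h => ->. Qed.

Definition nbr (b d c : 'I_n) : Prop :=
  consec_x f b c /\ (f b < f c) = (f b < f d).

Lemma nbr_side b d e c : (f b < f d) = (f b < f e) -> nbr b d c -> nbr b e c.
Proof. by move=> hde [hc hs]; split; rewrite // hs. Qed.

Lemma nbr_far b d c : nbr b d c -> d != b ->
  (f b < f c -> f c <= f d) /\ (f c < f b -> f d <= f c).
Proof.
move=> [[_ hc] hs] /coord_neq hdb; split=> h; rewrite leNgt; apply/negP => h'.
- by apply: (hc d); apply/betweenP; left; rewrite -hs h.
- apply: (hc d); apply/betweenP; right; rewrite h' lt_neqAle hdb /=.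
  by rewrite leNgt -hs ltNge ltW.
Qed.

Lemma nbr_cases b d c : nbr b d c -> d != b ->
  (f b < f c <= f d) \/ (f d <= f c < f b).
Proof.
move=> hc hdb; have [h1 h2] := nbr_far hc hdb.
case: (ltgtP (f b) (f c)) => h; [left; rewrite h1 | right; rewrite h2 |] => //.
by move: (coord_neq (consec_neq hc.1)); rewrite h eqxx.
Qed.

Lemma nbr_uniq b d c c' : nbr b d c -> nbr b d c' -> c = c'.
Proof.
move=> [hc hs] [hc' hs']; have hcb := consec_neq hc; have hc'b := consec_neq hc'.
have hsc : (f b < f c) = (f b < f c') by rewrite hs hs'.
have [h1 h2] := nbr_far (conj hc hsc) hc'b.
have [h1' h2'] := nbr_far (conj hc' (esym hsc)) hcb.
apply: hf; case: (ltgtP (f b) (f c)) => h; last by move: (coord_neq hcb); rewrite h eqxx.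
- by apply/eqP; rewrite eq_le h1 // h1' // -hsc.
- have h' : f c' < f b.
    by rewrite lt_neqAle (coord_neq hc'b) leNgt -hsc ltNge ltW.
  by apply/eqP; rewrite eq_le h2 // h2'.
Qed.

Lemma between_le a b c :
  between a b c -> Num.min (f a) (f b) <= f c <= Num.max (f a) (f b).
Proof. by case/andP=> h1 h2; rewrite !ltW. Qed.

Lemma between_sym a b c : between a b c = between b a c.
Proof. by rewrite /between minC maxC. Qed.

Lemma between_of_le a b c : c != a -> c != b -> f a <= f c <= f b -> between a b c.
Proof.
move=> /coord_neq hca /coord_neq hcb /andP[h1 h2]; apply/betweenP; left.
by rewrite !lt_neqAle h1 h2 hcb eq_sym hca.
Qed.

Lemma consec_range a b k : consec_x f a b ->
  Num.min (f a) (f b) <= f k <= Num.max (f a) (f b) -> k = a \/ k = b.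
Proof.
move=> [hab0 hc] hk; case: (eqVneq k a) => [-> | /coord_neq hka]; first by left.
case: (eqVneq k b) => [-> | /coord_neq hkb]; first by right.
exfalso; apply: (hc k); move: hk; case: (ltgtP (f a) (f b)) => hab /andP[h1 h2].
- by rewrite !lt_neqAle h1 h2 eq_sym hka hkb.
- by rewrite !lt_neqAle h1 h2 eq_sym hka hkb.
- by move: hab0; rewrite hab eqxx.
Qed.

Definition nbetween (a b : 'I_n) : nat := #|[set c | between a b c]|.

Lemma nbetween_lt a b c : between a b c ->
  (nbetween a c < nbetween a b)%N /\ (nbetween c b < nbetween a b)%N.
Proof.
move=> hc; have /betweenP hc' := hc.
have nac : ~~ between a c c by apply/negP => /betweenP [] /andP[]; lra.
have ncb : ~~ between c b c by apply/negP => /betweenP [] /andP[]; lra.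
have sub a' b' : a' = a /\ b' = c \/ a' = c /\ b' = b ->
    [set k | between a' b' k] \subset [set k | between a b k].
  move=> e; apply/subsetP => k; rewrite !inE => /betweenP hk; apply/betweenP.
  by case: e hk hc' => -[-> ->] [] /andP[? ?] [] /andP[? ?];
    [left | exfalso | exfalso | right | left | exfalso | exfalso | right]; lra.
split; apply: proper_card; apply/properP; split;
  try (by apply: sub; first [by left | by right]);
  by exists c; rewrite !inE ?hc ?nac ?ncb.
Qed.

Lemma between_ind (P : 'I_n -> 'I_n -> Prop) :
  (forall a b, (forall c, between a b c -> P a c /\ P c b) -> P a b) ->
  forall a b, P a b.
Proof.
move=> step a b; move: {-1}(nbetween a b) (erefl (nbetween a b)) => m.
elim/ltn_ind: m a b => m IH a b em; apply: step => c hc.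
have [h1 h2] := nbetween_lt hc.
by split; [apply: (IH _ _ a c erefl) | apply: (IH _ _ c b erefl)]; rewrite -em.
Qed.

Lemma nbr_ex b d : b != d -> exists c, nbr b d c.
Proof.
move: b d; apply: between_ind => b d IH hbd.
case: (pickP (between b d)) => [c hc | hno].
- have [hbc _] := between_neq hc; have [e he] := (IH c hc).1 hbc.
  by exists e; apply: nbr_side he; rewrite (between_side hc).
- exists d; split=> //; split=> [|c]; first exact: coord_neq.
  by apply/negP; rewrite -/(between b d c) hno.
Qed.
End Coordinate.

Lemma between_transfer_up (R : realFieldType) n (f g : 'I_n -> R) i j c :
  g c != g i -> g c != g j ->
  (f i < f c) = (g i < g c) -> (f j < f c) = (g j < g c) ->
  between f i j c -> between g i j c.
Proof.
move=> ni nj ei ej /betweenP hc; apply/betweenP.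
case: hc => /andP[h1 h2]; [left | right]; apply/andP; split.
- by rewrite -ei.
- by rewrite lt_neqAle nj leNgt -ej (lt_gtF h2).
- by rewrite -ej.
- by rewrite lt_neqAle ni leNgt -ei (lt_gtF h2).
Qed.

Lemma between_transfer_down (R : realFieldType) n (f g : 'I_n -> R) i j c :
  g c != g i -> g c != g j ->
  (f i < f c) = (g c < g i) -> (f j < f c) = (g c < g j) ->
  between f i j c -> between g i j c.
Proof.
move=> ni nj ei ej /betweenP hc; apply/betweenP.
case: hc => /andP[h1 h2]; [right | left]; apply/andP; split.
- by rewrite lt_neqAle eq_sym nj leNgt -ej (lt_gtF h2).
- by rewrite -ei.
- by rewrite lt_neqAle eq_sym ni leNgt -ei (lt_gtF h2).
- by rewrite -ej.
Qed.

Section ManhattanPaths.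
Variables (R : realFieldType) (n : nat) (x y : 'I_n -> R).
Hypotheses (hx : injective x) (hy : injective y).
Variable N : rel (vtx n).
Hypothesis hO : oriented_subnetwork x y N.

Lemma edge_antisym u v : N u v -> N v u -> False.
Proof. by move=> huv hvu; move: (hO huv).2; rewrite hvu. Qed.

Lemma dist1_triangle p q r : dist1 x y p r <= dist1 x y p q + dist1 x y q r.
Proof.
have := ler_distD (vx x q) (vx x p) (vx x r).
have := ler_distD (vy y q) (vy y p) (vy y r).
rewrite /dist1; lra.
Qed.

Lemma plen_ge p s : dist1 x y p (last p s) <= plen x y p s.
Proof.
elim: s p => [|v s IH] p /=; first by rewrite /dist1 !subrr normr0 addr0.
by have := IH v; have := dist1_triangle p v (last v s); lra.
Qed.

Lemma plen_rcons p s v :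
  plen x y p (rcons s v) = plen x y p s + dist1 x y (last p s) v.
Proof. by elim: s p => [|w s IH] p /=; rewrite ?add0r ?addr0 // IH addrA. Qed.

Lemma first_vertex p q : manhattan_path x y N p q -> p != q ->
  exists2 v, N p v & dist1 x y p v + dist1 x y v q = dist1 x y p q.
Proof.
case=> -[|v s] [hp hl hlen] hpq; first by move: hpq; rewrite -hl eqxx.
case/andP: hp => hpv _; exists v => //; move: hl hlen => /= hl.
by have := plen_ge v s; have := dist1_triangle p v q; rewrite hl; lra.
Qed.

Lemma last_vertex p q : manhattan_path x y N p q -> p != q ->
  exists2 u, N u q & dist1 x y p u + dist1 x y u q = dist1 x y p q.
Proof.
case=> s [hp hl hlen] hpq; case/lastP: s hp hl hlen => [|s w] hp hl hlen.
  by move: hpq; rewrite -hl eqxx.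
rewrite last_rcons in hl; subst w; move: hp; rewrite rcons_path => /andP [_ hu].
exists (last p s) => //; move: hlen; rewrite plen_rcons.
by have := plen_ge p s; have := dist1_triangle p (last p s) q; lra.
Qed.

Lemma route_side (a c d : R) :
  `|a - c| + `|c - d| = `|a - d| -> c != a -> (a < c) = (a < d).
Proof.
move=> h /eqP hca.
have norm_cases (z : R) : `|z| = z /\ 0 <= z \/ `|z| = - z /\ z < 0.
  by case: (lerP 0 z) => hz; [left; rewrite ger0_norm | right; rewrite ltr0_norm].
case: (norm_cases (a - c)) (norm_cases (c - d)) (norm_cases (a - d))
  => -[e1 h1] [] [e2 h2] [] [e3 h3]; rewrite e1 e2 e3 in h;
  by case: (ltrP a c) => h4; case: (ltrP a d) => h5 //; lra.
Qed.

Lemma dist1C p q : dist1 x y p q = dist1 x y q p.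
Proof. by rewrite /dist1 distrC (distrC (vy y p)). Qed.

Lemma grid_edge_sym u v : grid_edge x y u v -> grid_edge x y v u.
Proof. by case=> -[e h]; [left | right]; split; rewrite //; apply: consec_sym. Qed.

Lemma adjacent_on_route b k v : grid_edge x y (term b) v ->
  dist1 x y (term b) v + dist1 x y v (term k) = dist1 x y (term b) (term k) ->
  (exists2 c, nbr x b k c & v = (c, b)) \/ (exists2 r, nbr y b k r & v = (b, r)).
Proof.
case: v => v1 v2 hg; rewrite /dist1 /vx /vy /=.
have := ler_distD (x v1) (x b) (x k); have := ler_distD (y v2) (y b) (y k).
case: hg => -[/= <- hc] hdy hdx hv; [left; exists v1 | right; exists v2] => //.
- by split=> //; apply: route_side; [lra | exact: (coord_neq hx (consec_neq hc))].
- by split=> //; apply: route_side; [lra | exact: (coord_neq hy (consec_neq hc))].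
Qed.

Lemma no_path_from b k c r : k != b -> nbr x b k c -> nbr y b k r ->
  N (c, b) (term b) -> N (b, r) (term b) -> ~ manhattan_path x y N (term b) (term k).
Proof.
move=> hkb hc hr Nc Nr hp.
have hbk : term b != term k by apply: contraNneq hkb => -[->].
have [v Nv hv] := first_vertex hp hbk.
case: (adjacent_on_route (hO Nv).1 hv) => -[c' hc' ev]; subst v.
- by rewrite (nbr_uniq hx hc' hc) in Nv; apply: edge_antisym Nv Nc.
- by rewrite (nbr_uniq hy hc' hr) in Nv; apply: edge_antisym Nv Nr.
Qed.

Lemma no_path_to b k c r : k != b -> nbr x b k c -> nbr y b k r ->
  N (term b) (c, b) -> N (term b) (b, r) -> ~ manhattan_path x y N (term k) (term b).
Proof.
move=> hkb hc hr Nc Nr hp.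
have hkb' : term k != term b by apply: contraNneq hkb => -[->].
have [u Nu hu] := last_vertex hp hkb'.
rewrite addrC (dist1C u) !(dist1C (term k)) in hu.
case: (adjacent_on_route (grid_edge_sym (hO Nu).1) hu) => -[c' hc' eu]; subst u.
- by rewrite (nbr_uniq hx hc' hc) in Nu; apply: edge_antisym Nu Nc.
- by rewrite (nbr_uniq hy hc' hr) in Nu; apply: edge_antisym Nu Nr.
Qed.
End ManhattanPaths.

Section StripTypes.
Variables (R : realFieldType) (n : nat) (x y : 'I_n -> R).
Hypotheses (hx : injective x) (hy : injective y).
Variable N : rel (vtx n).

(* A strip is of horizontal type when, at both terminal corners, the horizontal
   side of its boundary cycle leaves the terminal and the vertical side enters
   it; otherwise it is of vertical type. *)
Definition htype (i j : 'I_n) : Prop :=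
  (pos_slope x y i j /\ boundary_ccw x y N i j) \/
  (~ pos_slope x y i j /\ boundary_cw x y N i j).
Definition vtype (i j : 'I_n) : Prop :=
  (pos_slope x y i j /\ boundary_cw x y N i j) \/
  (~ pos_slope x y i j /\ boundary_ccw x y N i j).

Lemma pos_slope_sym i j : pos_slope x y j i = pos_slope x y i j.
Proof. by rewrite /pos_slope -mulrNN !opprB. Qed.

Lemma ccw_side_sym i j : ccw_side x y j i = ccw_side x y i j.
Proof. by rewrite /ccw_side (minC (x j)) (maxC (x j)) (minC (y j)) (maxC (y j)). Qed.

Lemma htype_sym i j : htype j i = htype i j.
Proof. by rewrite /htype /boundary_ccw /boundary_cw ccw_side_sym pos_slope_sym. Qed.

Lemma vtype_sym i j : vtype j i = vtype i j.
Proof. by rewrite /vtype /boundary_ccw /boundary_cw ccw_side_sym pos_slope_sym. Qed.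

Lemma compatible_of_types i j k l :
  (htype i j /\ htype k l) \/ (vtype i j /\ vtype k l) -> compatible x y N i j k l.
Proof. by rewrite /compatible /htype /vtype; tauto. Qed.

Ltac ccw_by side := side; split=> //; try split;
  match goal with |- is_true _ => lra end.
Ltac ccw_solve := solve [ ccw_by ltac:(apply: Or41) | ccw_by ltac:(apply: Or42)
                        | ccw_by ltac:(apply: Or43) | ccw_by ltac:(apply: Or44) ].

Lemma corner_sides b j c r : j != b -> nbr x b j c -> nbr y b j r ->
  (pos_slope x y b j ->
     ccw_side x y b j (term b) (c, b) /\ ccw_side x y b j (b, r) (term b)) /\
  (~ pos_slope x y b j ->
     ccw_side x y b j (c, b) (term b) /\ ccw_side x y b j (term b) (b, r)).
Proof.
move=> hjb hc hr; rewrite /pos_slope /ccw_side /vx /vy /=.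
case: (nbr_cases hx hc hjb) => /andP[hc1 hc2]; case: (nbr_cases hy hr hjb) => /andP[hr1 hr2].
- rewrite (min_l (ltW (lt_le_trans hc1 hc2))) (max_r (ltW (lt_le_trans hc1 hc2))).
  rewrite (min_l (ltW (lt_le_trans hr1 hr2))) (max_r (ltW (lt_le_trans hr1 hr2))).
  by split=> hp; [split; ccw_solve | exfalso; apply: hp; nra].
- rewrite (min_l (ltW (lt_le_trans hc1 hc2))) (max_r (ltW (lt_le_trans hc1 hc2))).
  rewrite (min_r (ltW (le_lt_trans hr1 hr2))) (max_l (ltW (le_lt_trans hr1 hr2))).
  by split=> hp; [exfalso; move: hp; nra | split; ccw_solve].
- rewrite (min_r (ltW (le_lt_trans hc1 hc2))) (max_l (ltW (le_lt_trans hc1 hc2))).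
  rewrite (min_l (ltW (lt_le_trans hr1 hr2))) (max_r (ltW (lt_le_trans hr1 hr2))).
  by split=> hp; [exfalso; move: hp; nra | split; ccw_solve].
- rewrite (min_r (ltW (le_lt_trans hc1 hc2))) (max_l (ltW (le_lt_trans hc1 hc2))).
  rewrite (min_r (ltW (le_lt_trans hr1 hr2))) (max_l (ltW (le_lt_trans hr1 hr2))).
  by split=> hp; [split; ccw_solve | exfalso; apply: hp; nra].
Qed.

Lemma corner_edges b j c r : j != b -> nbr x b j c -> nbr y b j r ->
  (htype b j -> N (term b) (c, b) /\ N (b, r) (term b)) /\
  (vtype b j -> N (c, b) (term b) /\ N (term b) (b, r)).
Proof.
move=> hjb hc hr; have [hpos hneg] := corner_sides hjb hc hr.
have gc : grid_edge x y (term b) (c, b) by left; split=> //; exact: hc.1.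
have gr : grid_edge x y (b, r) (term b) by right; split=> //; exact: consec_sym hr.1.
have gc' := grid_edge_sym gc; have gr' := grid_edge_sym gr.
split=> -[[hp hb] | [hp hb]].
- by have [s1 s2] := hpos hp; split; apply: hb.
- by have [s1 s2] := hneg hp; split; apply: hb.
- by have [s1 s2] := hpos hp; split; apply: hb.
- by have [s1 s2] := hneg hp; split; apply: hb.
Qed.
End StripTypes.

Section Corners.
Variables (R : realFieldType) (n : nat) (x y : 'I_n -> R).
Hypotheses (hx : injective x) (hy : injective y).

Definition interior (b : 'I_n) : Prop := ~ inP24 x y b /\ ~ inP13 x y b.

Lemma not_P24_witness b : ~ inP24 x y b ->
  exists2 k, k != b & (x b < x k) != (y b < y k).
Proof.
move=> h; apply: NNPP => hno; apply: h => k hk; apply/eqP; apply: NNPP => /negP hkb.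
apply: hno; exists k => //.
have hxk := coord_neq hx hkb; have hyk := coord_neq hy hkb.
case: hk => -[h1 h2].
- have lx : x k < x b by rewrite lt_neqAle hxk h1.
  have ly : y b < y k by rewrite lt_neqAle eq_sym hyk h2.
  by rewrite ly (lt_gtF lx).
- have lx : x b < x k by rewrite lt_neqAle eq_sym hxk h1.
  have ly : y k < y b by rewrite lt_neqAle hyk h2.
  by rewrite lx (lt_gtF ly).
Qed.

Lemma not_P13_witness b : ~ inP13 x y b ->
  exists2 k, k != b & (x b < x k) = (y b < y k).
Proof.
move=> h; apply: NNPP => hno; apply: h => k hk; apply/eqP; apply: NNPP => /negP hkb.
apply: hno; exists k => //.
have hxk := coord_neq hx hkb; have hyk := coord_neq hy hkb.
case: hk => -[h1 h2].
- have lx : x b < x k by rewrite lt_neqAle eq_sym hxk h1.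
  have ly : y b < y k by rewrite lt_neqAle eq_sym hyk h2.
  by rewrite lx ly.
- have lx : x k < x b by rewrite lt_neqAle hxk h1.
  have ly : y k < y b by rewrite lt_neqAle hyk h2.
  by rewrite (lt_gtF lx) (lt_gtF ly).
Qed.


Lemma non_interior b : ~ interior b -> inP24 x y b \/ inP13 x y b.
Proof. by move=> h; apply: NNPP => h'; apply: h; split=> hb; apply: h'; [left | right]. Qed.

Lemma P24_P13 p q : inP24 x y p -> inP13 x y q -> p = q.
Proof.
move=> hp hq; case: (lerP (x p) (x q)) => h1; case: (lerP (y p) (y q)) => h2.
- by apply: hq; right.
- by apply/esym/hp; right; split=> //; apply: ltW.
- by apply/esym/hp; left; split=> //; apply: ltW.
- by apply: hq; left; split; apply: ltW.
Qed.

Lemma P24_order p c : inP24 x y p -> c != p -> (x p < x c) = (y p < y c).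
Proof.
move=> hp hcp; have hxc := coord_neq hx hcp; have hyc := coord_neq hy hcp.
case: (ltgtP (x p) (x c)) => h1; case: (ltgtP (y p) (y c)) => h2 //;
  try by [move: hxc; rewrite h1 eqxx | move: hyc; rewrite h2 eqxx].
all: exfalso; move/eqP: hcp; apply; apply: hp.
all: first [by left; split; apply: ltW | by right; split; apply: ltW].
Qed.

Lemma P13_order p c : inP13 x y p -> c != p -> (x p < x c) = (y c < y p).
Proof.
move=> hp hcp; have hxc := coord_neq hx hcp; have hyc := coord_neq hy hcp.
case: (ltgtP (x p) (x c)) => h1; case: (ltgtP (y c) (y p)) => h2 //;
  try by [move: hxc; rewrite h1 eqxx | move: hyc; rewrite h2 eqxx].
all: exfalso; move/eqP: hcp; apply; apply: hp.
all: first [by left; split; apply: ltW | by right; split; apply: ltW].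
Qed.

Lemma P24_below p k : inP24 x y p -> x k <= x p -> y k <= y p.
Proof.
move=> hp hk; rewrite leNgt; apply/negP => hyk.
have e := hp k (or_introl (conj hk (ltW hyk))).
by move: hyk; rewrite e ltxx.
Qed.

Lemma P24_above p k : inP24 x y p -> x p <= x k -> y p <= y k.
Proof.
move=> hp hk; rewrite leNgt; apply/negP => hyk.
have e := hp k (or_intror (conj hk (ltW hyk))).
by move: hyk; rewrite e ltxx.
Qed.

Lemma P13_above p k : inP13 x y p -> x k <= x p -> y p <= y k.
Proof.
move=> hp hk; rewrite leNgt; apply/negP => hyk.
have e := hp k (or_intror (conj hk (ltW hyk))).
by move: hyk; rewrite e ltxx.
Qed.

Lemma P13_below p k : inP13 x y p -> x p <= x k -> y k <= y p.
Proof.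
move=> hp hk; rewrite leNgt; apply/negP => hyk.
have e := hp k (or_introl (conj hk (ltW hyk))).
by move: hyk; rewrite e ltxx.
Qed.
End Corners.

Section TerminalConflict.
Variables (R : realFieldType) (n : nat) (x y : 'I_n -> R).
Hypotheses (hx : injective x) (hy : injective y).
Variable N : rel (vtx n).
Hypothesis hO : oriented_subnetwork x y N.
Hypothesis hM : forall t t', t != t' -> manhattan_path x y N (term t) (term t').

Lemma corner_nbrs b j : j != b -> exists c r, nbr x b j c /\ nbr y b j r.
Proof.
rewrite eq_sym => hbj.
by have [c hc] := nbr_ex hx hbj; have [r hr] := nbr_ex hy hbj; exists c, r.
Qed.

(* A terminal [b] cannot be a corner of a strip of horizontal type towards [j]
   and of a strip of vertical type towards [l] when [j] and [l] are on the same
   side of [b] in x or in y: the shared boundary edge would get both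
   orientations. *)
Lemma type_conflict_same_side b j l : j != b -> l != b ->
  (x b < x j) = (x b < x l) \/ (y b < y j) = (y b < y l) ->
  htype x y N b j -> vtype x y N b l -> False.
Proof.
move=> hj hl hs Hj Vl.
have [c [r [hc hr]]] := corner_nbrs hj; have [c' [r' [hc' hr']]] := corner_nbrs hl.
have [Hc Hr] := (corner_edges hx hy N hj hc hr).1 Hj.
case: hs => hs.
- have [Vc _] := (corner_edges hx hy N hl (nbr_side hs hc) hr').2 Vl.
  exact: (edge_antisym hO Hc Vc).
- have [_ Vr] := (corner_edges hx hy N hl hc' (nbr_side hs hr)).2 Vl.
  exact: (edge_antisym hO Hr Vr).
Qed.

(* If moreover a third terminal [k] lies in a quadrant of [b] sharing its
   x-side with [j] and its y-side with [l] (or conversely), then both edges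
   joining [b] towards [k] leave [b] (or both enter [b]), so there is no
   Manhattan path from [k] to [b] (or from [b] to [k]). *)
Lemma type_conflict_quadrant b j l k : j != b -> l != b -> k != b ->
  ((x b < x j) = (x b < x k) /\ (y b < y l) = (y b < y k)) \/
  ((x b < x l) = (x b < x k) /\ (y b < y j) = (y b < y k)) ->
  htype x y N b j -> vtype x y N b l -> False.
Proof.
move=> hj hl hk hq Hj Vl.
have [c [r [hc hr]]] := corner_nbrs hj; have [c' [r' [hc' hr']]] := corner_nbrs hl.
have [Hc Hr] := (corner_edges hx hy N hj hc hr).1 Hj.
have [Vc Vr] := (corner_edges hx hy N hl hc' hr').2 Vl.
case: hq => -[ex ey].
- apply: (no_path_to hx hy hO hk (nbr_side ex hc) (nbr_side ey hr') Hc Vr).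
  exact: hM.
- apply: (no_path_from hx hy hO hk (nbr_side ex hc') (nbr_side ey hr) Vc Hr).
  by apply: hM; rewrite eq_sym.
Qed.

Lemma interior_type_conflict b j l : interior x y b -> j != b -> l != b ->
  htype x y N b j -> vtype x y N b l -> False.
Proof.
move=> [n24 n13] hj hl Hj Vl.
case: (boolP ((x b < x j) == (x b < x l))) => [/eqP e | nx].
  by apply: (type_conflict_same_side hj hl _ Hj Vl); left.
case: (boolP ((y b < y j) == (y b < y l))) => [/eqP e | ny].
  by apply: (type_conflict_same_side hj hl _ Hj Vl); right.
have [k hk hkq] : exists2 k, k != b &
    ((x b < x k) == (y b < y k)) != ((x b < x j) == (y b < y j)).
  case: (boolP ((x b < x j) == (y b < y j))) => hq.
  - by have [k hk e] := not_P24_witness hx hy n24; exists k; rewrite // (negbTE e).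
  - by have [k hk e] := not_P13_witness hx hy n13; exists k; rewrite // e eqxx.
apply: (type_conflict_quadrant hj hl hk _ Hj Vl).
move: nx ny hkq; case: (x b < x j); case: (x b < x l); case: (y b < y j);
  case: (y b < y l); case: (x b < x k); case: (y b < y k) => //= *; by [left | right].
Qed.
End TerminalConflict.

Section Blocks.
Variables (R : realFieldType) (n : nat) (x y : 'I_n -> R).
Hypotheses (hx : injective x) (hy : injective y).
Variable N : rel (vtx n).
Hypothesis hO : oriented_subnetwork x y N.
Hypothesis hM : forall t t', t != t' -> manhattan_path x y N (term t) (term t').
Hypothesis hstrips : forall i j, strip x y i j -> boundary_directed_cycle x y N i j.

Definition xconvex (B : {set 'I_n}) : Prop :=
  forall i j k, i \in B -> j \in B -> x i <= x k <= x j -> k \in B.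
Definition corners_extreme (B : {set 'I_n}) : Prop :=
  forall b, b \in B -> ~ interior x y b ->
    (forall k, k \in B -> x b <= x k) \/ (forall k, k \in B -> x k <= x b).

Lemma strip_type i j : strip x y i j -> htype x y N i j \/ vtype x y N i j.
Proof.
move/hstrips; rewrite /htype /vtype /pos_slope.
case: (boolP (0 < (x i - x j) * (y i - y j))) => hp [] hb.
- by left; left.
- by right; left.
- by right; right; split=> //; apply/negP.
- by left; right; split=> //; apply/negP.
Qed.

Lemma strip_neq i j : strip x y i j -> i != j.
Proof. by case=> -[[]]. Qed.

Lemma strip_of_consec a b : consec_x x a b -> strip x y a b.
Proof.
move=> hab; left; split=> //; split=> [|k [hk _]]; first by rewrite eq_sym (consec_neq hab).
by case: (consec_range hx hab hk); [left | right].
Qed.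

Lemma strip_types_exclusive i j : i != j -> htype x y N i j -> vtype x y N i j -> False.
Proof.
by rewrite eq_sym => hji; apply: (type_conflict_same_side hx hy hO hji hji); left.
Qed.

(* By induction on
   the number of terminals between [a] and [b]: a terminal [c] in between is
   interior, and the strip from [c] to an x-neighbour has one of the two types,
   so the induction hypothesis applies to [a, c] or to [c, b]; when [a] and [b]
   coincide or are x-consecutive, [interior_type_conflict] applies. *)
Lemma interior_types_agree B : xconvex B -> corners_extreme B ->
  forall a b, a \in B -> b \in B -> interior x y a -> interior x y b ->
  forall j l, j != a -> l != b -> htype x y N a j -> vtype x y N b l -> False.
Proof.
move=> hBc hBe a b; move: a b; apply: (@between_ind _ _ x) => a b IH.
move=> ha hb ia ib j l hj hl Ha Vb.
case: (pickP (between x a b)) => [c hc | hno].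
- have hcB : c \in B.
    by case/betweenP: hc => /andP[h1 h2]; [apply: (hBc a b) | apply: (hBc b a)];
      rewrite // !ltW.
  have ic : interior x y c.
    apply: NNPP => nic; case/betweenP: hc => /andP[h1 h2];
    by case: (hBe c hcB nic) => hext; have := hext a ha; have := hext b hb; lra.
  have [hac _] := between_neq hc; have hca : c != a by rewrite eq_sym.
  have [e [he _]] := nbr_ex hx hca; have hec := consec_neq he.
  case: (strip_type (strip_of_consec he)) => Te.
  + exact: ((IH c hc).2 hcB hb ic ib e l hec hl Te Vb).
  + exact: ((IH c hc).1 ha hcB ia ic j e hj hec Ha Te).
- case: (eqVneq a b) => [eab | nab].
    by subst b; apply: (interior_type_conflict hx hy hO hM ia hj hl Ha Vb).
  have hab : consec_x x a b.
    by split=> [|c]; [exact: (coord_neq hx nab) | apply/negP; rewrite -/(between x a b c) hno].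
  case: (strip_type (strip_of_consec hab)) => T.
  + by rewrite -htype_sym in T; apply: (interior_type_conflict hx hy hO hM ib nab hl T Vb).
  + by apply: (interior_type_conflict hx hy hO hM ia hj (consec_neq hab) Ha T).
Qed.

(* The x-range of a strip whose two corners are non-interior contains no other
   terminal: both corners lie in [P24] (or both in [P13]), so such a terminal
   would also be y-between them, i.e. inside the empty rectangle. *)
Lemma corner_strip_gap i j : strip x y i j -> ~ interior x y i -> ~ interior x y j ->
  forall c, ~~ between x i j c.
Proof.
move=> hs ni nj c; apply/negP => hc.
have [hic hjc] := between_neq hc.
have hci : c != i by rewrite eq_sym.
have hcj : c != j by rewrite eq_sym.
have [_ hemp] : empty_rect x y i j by case: hs => -[].
suff /hemp : in_rect x y i j (x c) (y c) by case=> e; [move: hci | move: hcj]; rewrite e eqxx.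
split; first exact: between_le hc.
apply: between_le; move: (coord_neq hy hci) (coord_neq hy hcj) => ni' nj'.
case: (non_interior ni) (non_interior nj) => hi [] hj.
- exact: (between_transfer_up ni' nj' (P24_order hx hy hi hci) (P24_order hx hy hj hcj)).
- by move: (strip_neq hs); rewrite (P24_P13 hi hj) eqxx.
- by move: (strip_neq hs); rewrite (P24_P13 hj hi) eqxx.
- exact: (between_transfer_down ni' nj' (P13_order hx hy hi hci) (P13_order hx hy hj hcj)).
Qed.

(* In a block, the two corners of such a strip are the x-extreme terminals, so
   the block consists of them alone. *)
Lemma corner_strip_block B i j : corners_extreme B -> strip x y i j ->
  i \in B -> j \in B -> ~ interior x y i -> ~ interior x y j ->
  forall k, k \in B -> k = i \/ k = j.
Proof.
move=> hBe hs hi hj ni nj k hk.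
case: (eqVneq k i) => [-> | hki]; first by left.
case: (eqVneq k j) => [-> | hkj]; first by right.
exfalso; move/negP: (corner_strip_gap hs ni nj k); apply.
have /negP hxij := coord_neq hx (strip_neq hs).
case: (hBe i hi ni) (hBe j hj nj) => ei [] ej.
- by case: hxij; rewrite eq_le ei // ej.
- by apply: (between_of_le hx hki hkj); rewrite ei // ej.
- by rewrite between_sym; apply: (between_of_le hx hkj hki); rewrite ei // ej.
- by case: hxij; rewrite eq_le ei // ej.
Qed.

Lemma typed_corner (S : 'I_n -> 'I_n -> Prop) (B : {set 'I_n}) i j :
  (forall i j, S j i = S i j) -> i != j -> i \in B -> j \in B -> S i j ->
  (exists a a', [/\ a \in B, interior x y a, a' != a & S a a']) \/
  (~ interior x y i /\ ~ interior x y j).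
Proof.
move=> Ssym hij hi hj hS.
case: (classic (interior x y i)) => ii; first by left; exists i, j; rewrite eq_sym.
case: (classic (interior x y j)) => ij; last by right.
by left; exists j, i; rewrite Ssym.
Qed.

Lemma block_types_agree B : xconvex B -> corners_extreme B ->
  forall i j k l, i \in B -> j \in B -> k \in B -> l \in B ->
  strip x y i j -> strip x y k l -> htype x y N i j -> vtype x y N k l -> False.
Proof.
move=> hBc hBe i j k l hi hj hk hl sij skl Hij Vkl.
have nij := strip_neq sij; have nkl := strip_neq skl.
case: (typed_corner (@htype_sym _ _ x y N) nij hi hj Hij)
  => [[a [a' [ha ia ha' Ha]]] | [ni nj]].
- case: (typed_corner (@vtype_sym _ _ x y N) nkl hk hl Vkl)
    => [[b [b' [hb ib hb' Vb]]] | [nk nl]].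
  + exact: (interior_types_agree hBc hBe ha hb ia ib ha' hb' Ha Vb).
  + have cover := corner_strip_block hBe skl hk hl nk nl.
    have Hkl := same_pair (@htype_sym _ _ x y N) nij (cover i hi) (cover j hj) Hij.
    exact: (strip_types_exclusive nkl Hkl Vkl).
- have cover := corner_strip_block hBe sij hi hj ni nj.
  have Vij := same_pair (@vtype_sym _ _ x y N) nkl (cover k hk) (cover l hl) Vkl.
  exact: (strip_types_exclusive nij Hij Vij).
Qed.
End Blocks.

Section BlockShapes.
Variables (R : realFieldType) (n : nat) (x y : 'I_n -> R).

(* In every case of the definition, the non-interior terminals all belong to
   the set [P] whose x-order delimits the blocks, and each block is a vertical
   slab of that x-order (the y-constraints in its definition are implied by the
   x-constraints). *)
Lemma first_block_props (P : 'I_n -> Prop) (Y : pred 'I_n) p :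
  (forall b, ~ interior x y b -> P b) -> first_x x P p ->
  (forall k, x k <= x p -> Y k) ->
  xconvex x [set k | (x k <= x p) && Y k] /\
  corners_extreme x y [set k | (x k <= x p) && Y k].
Proof.
move=> hP [_ hfirst] hY; split.
- move=> i j k _; rewrite !inE => /andP[hj _] /andP[_ hkj].
  by have hk := le_trans hkj hj; rewrite hk hY.
- move=> b; rewrite inE => /andP[hb _] /hP /hfirst hpb; right => k.
  by rewrite inE => /andP[hk _]; apply: le_trans hk hpb.
Qed.

Lemma last_block_props (P : 'I_n -> Prop) (Y : pred 'I_n) p :
  (forall b, ~ interior x y b -> P b) -> last_x x P p ->
  (forall k, x p <= x k -> Y k) ->
  xconvex x [set k | (x p <= x k) && Y k] /\
  corners_extreme x y [set k | (x p <= x k) && Y k].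
Proof.
move=> hP [_ hlast] hY; split.
- move=> i j k; rewrite !inE => /andP[hi _] _ /andP[hik _].
  by have hk := le_trans hi hik; rewrite hk hY.
- move=> b; rewrite inE => /andP[hb _] /hP /hlast hbp; left => k.
  by rewrite inE => /andP[hk _]; apply: le_trans hbp hk.
Qed.

Lemma middle_block_props (P : 'I_n -> Prop) p q :
  (forall b, ~ interior x y b -> P b) -> next_x x P p q ->
  (forall k, x p <= x k <= x q -> Num.min (y p) (y q) <= y k <= Num.max (y p) (y q)) ->
  xconvex x (rect_set x y p q) /\ corners_extreme x y (rect_set x y p q).
Proof.
move=> hP [_ _ hpq hnext] hY.
have memB k : (k \in rect_set x y p q) = (x p <= x k <= x q).
  rewrite inE (min_l (ltW hpq)) (max_r (ltW hpq)).
  by apply/andP/idP => [[] // | hk]; split; last exact: hY.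
split.
- move=> i j k; rewrite !memB => /andP[hi _] /andP[_ hj] /andP[h1 h2].
  by rewrite (le_trans hi h1) (le_trans h2 hj).
- move=> b; rewrite memB => /andP[h1 h2] /hP /hnext hb.
  case: (eqVneq (x b) (x p)) => [e | ne].
    by left => k; rewrite memB e => /andP[].
  have hqb : x q <= x b.
    by rewrite leNgt; apply/negP => hbq; apply: hb; rewrite hbq andbT lt_neqAle eq_sym ne.
  by right => k; rewrite memB => /andP[_ hk]; apply: le_trans hk hqb.
Qed.

Lemma block_props B : is_block x y B -> xconvex x B /\ corners_extreme x y B.
Proof.
case=> [[[t ht] hB] | [n24 _ hB] | [n24 n13 ->]].
- have hP b : ~ interior x y b -> inP24 x y b.
    by case/non_interior => // hb; rewrite -(P24_P13 ht hb).
  case: hB => [[p [hp ->]] | [p [q [hpq ->]]] | [p [hp ->]]].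
  + by apply: (first_block_props (Y := fun k => y k <= y p) hP hp) => k; apply: P24_below hp.1.
  + have [hp hq _ _] := hpq; apply: (middle_block_props hP hpq) => k /andP[h1 h2].
    by rewrite ge_min le_max (P24_above hp h1) (P24_below hq h2) orbT.
  + by apply: (last_block_props (Y := fun k => y p <= y k) hP hp) => k; apply: P24_above hp.1.
- have hP b : ~ interior x y b -> inP13 x y b.
    by case/non_interior => // hb; case: n24; exists b.
  case: hB => [[p [hp ->]] | [p [q [hpq ->]]] | [p [hp ->]]].
  + by apply: (first_block_props (Y := fun k => y p <= y k) hP hp) => k; apply: P13_above hp.1.
  + have [hp hq _ _] := hpq; apply: (middle_block_props hP hpq) => k /andP[h1 h2].
    by rewrite ge_min le_max (P13_below hp h1) (P13_above hq h2) orbT.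
  + by apply: (last_block_props (Y := fun k => y k <= y p) hP hp) => k; apply: P13_below hp.1.
- split=> [i j k _ _ _ | b _ /non_interior [] hb]; rewrite ?inE //.
  by case: n24; exists b.
  by case: n13; exists b.
Qed.
End BlockShapes.

Theorem lemma4p1 (R : realFieldType) (n : nat) (x y : 'I_n -> R)
    (hx : injective x) (hy : injective y) (N : rel (vtx n))
    (hN : bidirected_manhattan x y N)
    (hstrips : forall i j, strip x y i j -> boundary_directed_cycle x y N i j)
    (B : {set 'I_n}) (hB : is_block x y B) :
  forall i j k l, i \in B -> j \in B -> k \in B -> l \in B ->
    strip x y i j -> strip x y k l -> compatible x y N i j k l.
Proof.
move=> i j k l hi hj hk hl sij skl.
have [hO hM] := hN; have [hBc hBe] := block_props hB.
have agree := block_types_agree hx hy hO hM hstrips hBc hBe.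
apply: compatible_of_types.
case: (strip_type hstrips sij) (strip_type hstrips skl) => Tij [] Tkl.
- by left.
- by case: (agree i j k l hi hj hk hl sij skl Tij Tkl).
- by case: (agree k l i j hk hl hi hj skl sij Tkl Tij).
- by right.
Qed.
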